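(* Let $p\in\{1,2\}$, let $s\ge 1$ be an integer ($s\ge 2$ if $p=2$), let $\varepsilon\ge 0$, and let the coefficients $\omega_0,\omega_1,b_j,a_j,\mu_j,\nu_j,\kappa_j,\gamma_j,c_j$ and the polynomials $R_k$ be as defined in the context. Let $A\in\mathbb{R}^{n\times n}$, $\Delta t>0$, let $\bm{r}_1,\dots,\bm{r}_s\in\mathbb{R}^n$, and define $$\bm{d}_0=\bm{0},\qquad \bm{d}_1=\bm{r}_1,\qquad \bm{d}_j=\nu_j\bm{d}_{j-1}+\kappa_j\bm{d}_{j-2}+\mu_j\,\Delta t A\bm{d}_{j-1}+\bm{r}_j,\quad j=2,\dots,s.$$ Then: (i) With $I$ the $n\times n$ identity matrix, $$\bm{d}_k=\sum_{j=1}^k\frac{b_k}{b_j}U_{k-j}(\omega_0 I+\omega_1\Delta t A)\,\bm{r}_j,\qquad k=1,\dots,s.$$ (ii) For $k=1,\dots,s$, the following identities hold (for $z\neq 0$, and hence as polynomial identities, so that the left-hand sides are polynomials in $z$): $$\overline{R}_k(z):=\frac{R_k(z)-1}{z}=\sum_{j=1}^k\frac{b_k}{b_j}U_{k-j}(\omega_0+\omega_1 z)(\mu_j+\gamma_j),$$ $$\widetilde{R}_k(z):=\frac{R_k(z)-1-c_kz}{z^2}=\sum_{j=2}^k\frac{b_k}{b_j}U_{k-j}(\omega_0+\omega_1 z)\,\mu_j c_{j-1}.$$ (iii) If $\bm{r}\in\mathbb{R}^n$ and $\bm{r}_j=(\mu_j+\gamma_j)\bm{r}$ for $j=1,\dots,s$,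 then $\bm{d}_k=\overline{R}_k(\Delta t A)\bm{r}$ for $k=1,\dots,s$.
   Context: Chebyshev polynomials: $T_0(x)=1$, $T_1(x)=x$, $T_j(x)=2xT_{j-1}(x)-T_{j-2}(x)$; $U_0(x)=1$, $U_1(x)=2x$, $U_j(x)=2xU_{j-1}(x)-U_{j-2}(x)$ for $j\ge 2$. For a square matrix $M$, $U_j(M)$ denotes the matrix polynomial. Runge–Kutta–Chebyshev (RKC) coefficients of order $p\in\{1,2\}$ with $s$ stages and damping $\varepsilon\ge0$: $\omega_0=1+\varepsilon/s^2$. If $p=1$: $\omega_1=T_s(\omega_0)/T_s'(\omega_0)$ and $b_j=1/T_j(\omega_0)$ for $j=0,\dots,s$. If $p=2$: $\omega_1=T_s'(\omega_0)/T_s''(\omega_0)$, $b_j=T_j''(\omega_0)/T_j'(\omega_0)^2$ for $j=2,\dots,s$, and $b_0=b_1=b_2$. In both cases $a_j=1-b_jT_j(\omega_0)$ for $j=0,\dots,s$; $\mu_1=b_1\omega_1$, $\gamma_1=0$, and for $j=2,\dots,s$: $\mu_j=2\omega_1b_j/b_{j-1}$, $\nu_j=2\omega_0 b_j/b_{j-1}$, $\kappa_j=-b_j/b_{j-2}$, $\gamma_j=-\mu_j a_{j-1}$. Also $c_0=0$, $c_1=\mu_1$, $c_j=\nu_jc_{j-1}+\kappa_jc_{j-2}+\mu_j+\gamma_j$ for $j=2,\dots,s$. The internal stability polynomials are $R_k(z)=a_k+b_kT_k(\omega_0+\omega_1 z)$, $k=0,\dots,s$. *)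

From HB Require Import structures.
From mathcomp Require Import all_boot all_order all_algebra.
Set Implicit Arguments. Unset Strict Implicit. Unset Printing Implicit Defensive.
Import Order.TTheory GRing.Theory Num.Theory.
Local Open Scope ring_scope.

Section RKC.
Variable R : realFieldType.

Fixpoint chebT (j : nat) : {poly R} :=
  match j with
  | 0 => 1
  | 1 => 'X
  | (m1.+1 as m2).+1 => 2%:R *: 'X * chebT m2 - chebT m1
  end.

Fixpoint chebU (j : nat) : {poly R} :=
  match j with
  | 0 => 1
  | 1 => 2%:R *: 'X
  | (m1.+1 as m2).+1 => 2%:R *: 'X * chebU m2 - chebU m1
  end.

Fixpoint mxpow (n : nat) (M : 'M[R]_n) (k : nat) : 'M[R]_n :=
  match k with
  | 0 => 1%:M
  | k.+1 => M *m mxpow M k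
  end.

Definition mxpeval (n : nat) (q : {poly R}) (M : 'M[R]_n) : 'M[R]_n :=
  \sum_(i < size q) q`_i *: mxpow M i.

Variables (p s : nat) (eps : R).

Definition rkc_w0 : R := 1 + eps / (s%:R ^+ 2).
Definition Tv (j : nat) : R := (chebT j).[rkc_w0].
Definition Td (j : nat) : R := (chebT j)^`().[rkc_w0].
Definition Tdd (j : nat) : R := (chebT j)^`(2).[rkc_w0].

Definition rkc_w1 : R := if p == 1%N then Tv s / Td s else Td s / Tdd s.

Definition rkc_b (j : nat) : R :=
  if p == 1%N then 1 / Tv j
  else if (j < 2)%N then Tdd 2 / (Td 2) ^+ 2 else Tdd j / (Td j) ^+ 2.

Definition rkc_a (j : nat) : R := 1 - rkc_b j * Tv j.

Definition rkc_mu (j : nat) : R :=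
  if j == 1%N then rkc_b 1 * rkc_w1 else 2%:R * rkc_w1 * rkc_b j / rkc_b j.-1.
Definition rkc_nu (j : nat) : R := 2%:R * rkc_w0 * rkc_b j / rkc_b j.-1.
Definition rkc_kappa (j : nat) : R := - (rkc_b j / rkc_b (j - 2)).
Definition rkc_gamma (j : nat) : R :=
  if j == 1%N then 0 else - (rkc_mu j * rkc_a j.-1).

Fixpoint rkc_c (j : nat) : R :=
  match j with
  | 0 => 0
  | 1 => rkc_mu 1
  | (m1.+1 as m2).+1 =>
      rkc_nu j * rkc_c m2 + rkc_kappa j * rkc_c m1 + rkc_mu j + rkc_gamma j
  end.

Definition rkc_R (k : nat) : {poly R} :=
  (rkc_a k)%:P + rkc_b k *: (chebT k \Po (rkc_w0%:P + rkc_w1 *: 'X)).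

Definition rkc_Rbar (k : nat) : {poly R} := (rkc_R k - 1) %/ 'X.
Definition rkc_Rtilde (k : nat) : {poly R} :=
  (rkc_R k - 1 - rkc_c k *: 'X) %/ 'X^2.

Fixpoint rkc_d (n : nat) (A : 'M[R]_n) (dt : R) (r : nat -> 'cV[R]_n) (j : nat)
  : 'cV[R]_n :=
  match j with
  | 0 => 0
  | 1 => r 1%N
  | (m1.+1 as m2).+1 =>
      rkc_nu j *: rkc_d A dt r m2 + rkc_kappa j *: rkc_d A dt r m1
      + rkc_mu j *: ((dt *: A) *m rkc_d A dt r m2) + r j
  end.

End RKC.

From HB Require Import structures.
From mathcomp Require Import all_boot all_order all_algebra ring lra.
Import Order.TTheory GRing.Theory Num.Theory.
Local Open Scope ring_scope.

(* Since nu_j = 2 w0 b_j / b_(j-1), mu_j = 2 w1 b_j / b_(j-1) and kappa_j = - b_j / b_(j-2),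
   the stage recursion divided by b_j is the Chebyshev recursion
   e_(j+2) = 2 (w0 + w1 dt A) e_(j+1) - e_j + r_(j+2) / b_(j+2), whose solution is the
   discrete convolution of the forcing terms with U_k(w0 + w1 dt A); this is (i).
   With z in place of dt A, the polynomials R_k - 1 and (R_k - 1) / z - c_k obey the same
   recursion with the forcing terms (mu_j + gamma_j) z and mu_j c_(j-1) z, so they are z times
   the corresponding convolutions, which is (ii).  For (iii), Rbar_k(dt A) r obeys the stage
   recursion itself.  All b_j are nonzero because T_j, T_j' and T_j'' are positive and
   nondecreasing in j at w0 >= 1. *)

Lemma eq_rec2_le {T : Type} (F : nat -> T -> T -> T) (K : nat) {f g : nat -> T} :
  f 0 = g 0 -> f 1 = g 1 ->
  (forall j, (j.+2 <= K)%N -> f j.+2 = F j (f j.+1) (f j)) ->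
  (forall j, (j.+2 <= K)%N -> g j.+2 = F j (g j.+1) (g j)) ->
  forall k, (k <= K)%N -> f k = g k.
Proof.
move=> eq0 eq1 fSS gSS.
have eq_pair k : (k < K)%N -> f k = g k /\ f k.+1 = g k.+1.
  elim: k => [|k IHk] ltkK; first by [].
  have [eqk eqk1] := IHk (ltnW ltkK).
  by split=> //; rewrite fSS // gSS // eqk eqk1.
by case=> [|k] lekK //; case: (eq_pair k lekK).
Qed.

Lemma eq_rec2 {T : Type} (F : nat -> T -> T -> T) {f g : nat -> T} :
  f 0 = g 0 -> f 1 = g 1 ->
  (forall j, f j.+2 = F j (f j.+1) (f j)) -> (forall j, g j.+2 = F j (g j.+1) (g j)) ->
  f =1 g.
Proof. by move=> eq0 eq1 fSS gSS k; apply: (eq_rec2_le F k) => // j _. Qed.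

Section ChebyshevConvolution.
Context {R : fieldType} {V : lmodType R} (N : {linear V -> V}) (u : nat -> V -> V).
Hypotheses (u0 : forall v, u 0 v = v) (u1 : forall v, u 1 v = 2%:R *: N v)
  (uSS : forall i v, u i.+2 v = 2%:R *: N (u i.+1 v) - u i v).
Variables (b : nat -> R) (g : nat -> V).
Hypothesis b_neq0 : forall j, b j != 0.

Definition cheb_conv k := \sum_(1 <= j < k.+1) (b k / b j) *: u (k - j) (g j).

Lemma cheb_conv0 : cheb_conv 0 = 0.
Proof. by rewrite /cheb_conv big_geq. Qed.

Lemma cheb_conv1 : cheb_conv 1 = g 1.
Proof. by rewrite /cheb_conv big_nat1 divff // scale1r u0. Qed.

Lemma cheb_convSS k :
  cheb_conv k.+2 = (b k.+2 / b k.+1) *: (2%:R *: N (cheb_conv k.+1))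
                   - (b k.+2 / b k) *: cheb_conv k + g k.+2.
Proof.
have head_terms : \sum_(1 <= j < k.+1) (b k.+2 / b j) *: u (k.+2 - j) (g j) =
    (b k.+2 / b k.+1) *: (2%:R *: \sum_(1 <= j < k.+1) N ((b k.+1 / b j) *: u (k.+1 - j) (g j)))
    - (b k.+2 / b k) *: cheb_conv k.
  rewrite !scaler_sumr -sumrB; apply: eq_big_nat => j /andP[_ ltjk].
  rewrite !subSn ?(ltnW ltjk) // uSS [N (_ *: _)]linearZ /= !scalerA scalerBr !scalerA.
  by congr (_ *: _ - _ *: _); field; rewrite !b_neq0.
rewrite /cheb_conv raddf_sum /= (big_nat_recr k.+2) //= !(big_nat_recr k.+1) //=.
rewrite -/(cheb_conv k) head_terms !subnn subSnn u0 u1 !divff // !scale1r.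
by rewrite u0 !scalerDr; congr (_ + _); rewrite addrAC.
Qed.

End ChebyshevConvolution.

Lemma rec2_nondecreasing {R : realDomainType} (x : R) (g : nat -> R) {f : nat -> R} :
  1 <= x -> (forall j, 0 <= g j) ->
  (forall j, f j.+2 = 2%:R * x * f j.+1 - f j + g j) -> 0 <= f 0 <= f 1 ->
  {homo f : i j / (i <= j)%N >-> i <= j}.
Proof.
move=> x_ge1 g_ge0 fSS f01.
have step j : 0 <= f j <= f j.+1.
  elim: j => [//|j /andP[fj_ge0 fj_le]].
  have fj1_ge0 := le_trans fj_ge0 fj_le.
  rewrite fj1_ge0 fSS /=; have := g_ge0 j; nra.
by apply: Order.NatMonotonyTheory.nondecnP => j; case/andP: (step j).
Qed.

Section Chebyshev.
Context {R : realFieldType}.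

Lemma chebT_SS j : chebT R j.+2 = 2%:R *: 'X * chebT R j.+1 - chebT R j.
Proof. by []. Qed.

Lemma chebU_SS j : chebU R j.+2 = 2%:R *: 'X * chebU R j.+1 - chebU R j.
Proof. by []. Qed.

Lemma deriv_chebT_SS j : (chebT R j.+2)^`() =
  2%:R *: chebT R j.+1 + 2%:R *: 'X * (chebT R j.+1)^`() - (chebT R j)^`().
Proof.
rewrite chebT_SS derivB derivM derivZ derivX.
by move: (chebT R j.+1) (chebT R j) => t1 t0; rewrite -!mul_polyC; ring.
Qed.

Lemma deriv2_chebT_SS j : (chebT R j.+2)^`(2) =
  4%:R *: (chebT R j.+1)^`() + 2%:R *: 'X * (chebT R j.+1)^`(2) - (chebT R j)^`(2).
Proof.
rewrite !derivSn !derivn0 deriv_chebT_SS !derivE.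
by move: (chebT R j.+1) (chebT R j) => t1 t0; rewrite -!mul_polyC; ring.
Qed.

Context {s : nat} {eps : R} (eps_ge0 : 0 <= eps).
Local Notation w0 := (rkc_w0 s eps).

Lemma rkc_w0_ge1 : 1 <= w0.
Proof. by rewrite lerDl divr_ge0 ?exprn_ge0. Qed.

Lemma Tv_ge1 j : 1 <= Tv s eps j.
Proof.
have Tv_homo : {homo Tv s eps : i j / (i <= j)%N >-> i <= j}.
  apply: (rec2_nondecreasing w0 (fun=> 0)) rkc_w0_ge1 _ _ _ => //.
    by move=> i; rewrite /Tv chebT_SS !hornerE.
  by rewrite /Tv /= !hornerE ler01 rkc_w0_ge1.
by have := Tv_homo 0 j isT; rewrite /Tv /= hornerE.
Qed.

Lemma Td_ge1 j : (1 <= j)%N -> 1 <= Td s eps j.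
Proof.
have Td_homo : {homo Td s eps : i j / (i <= j)%N >-> i <= j}.
  apply: (rec2_nondecreasing w0 (fun i => 2%:R * Tv s eps i.+1)) rkc_w0_ge1 _ _ _.
  - by move=> i; rewrite mulr_ge0 ?ler0n // (le_trans ler01 (Tv_ge1 _)).
  - by move=> i; rewrite /Td /Tv deriv_chebT_SS !hornerE; ring.
  - by rewrite /Td /= !derivE !hornerE lexx ler01.
by move/Td_homo; rewrite /Td /= derivX hornerE.
Qed.

Lemma Tdd_ge4 j : (2 <= j)%N -> 4%:R <= Tdd s eps j.
Proof.
have Tdd2 : Tdd s eps 2 = 4%:R.
  by rewrite /Tdd deriv2_chebT_SS /= !derivE !hornerE; ring.
have Tdd_homo : {homo Tdd s eps : i j / (i <= j)%N >-> i <= j}.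
  apply: (rec2_nondecreasing w0 (fun i => 4%:R * Td s eps i.+1)) rkc_w0_ge1 _ _ _.
  - by move=> i; rewrite mulr_ge0 ?ler0n // (le_trans ler01 (Td_ge1 _ (ltn0Sn i))).
  - by move=> i; rewrite /Tdd /Td deriv2_chebT_SS !hornerE; ring.
  - by rewrite /Tdd /= !derivE !hornerE lexx.
by move/Tdd_homo; rewrite Tdd2.
Qed.

Lemma rkc_b_gt0 p j : 0 < rkc_b p s eps j.
Proof.
have ratio_gt0 k : (2 <= k)%N -> 0 < Tdd s eps k / Td s eps k ^+ 2.
  move=> le2k; have := Tdd_ge4 _ le2k; have := Td_ge1 _ (ltnW le2k).
  by move=> Td_ge1 Tdd_ge4; rewrite divr_gt0 ?exprn_gt0; lra.
rewrite /rkc_b; case: ifP => _; first by rewrite div1r invr_gt0 (lt_le_trans ltr01 (Tv_ge1 j)).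
by case: ifP => [_|/negbT]; [exact: ratio_gt0 | rewrite -leqNgt; exact: ratio_gt0].
Qed.

End Chebyshev.

Section MatrixPolynomialEvaluation.
Context {R : realFieldType} {n : nat} (M : 'M[R]_n).

Lemma mxpeval_widen (q : {poly R}) K : (size q <= K)%N ->
  mxpeval q M = \sum_(i < K) q`_i *: mxpow M i.
Proof.
move=> le_qK; rewrite /mxpeval (big_ord_widen K (fun i => q`_i *: mxpow M i) le_qK).
rewrite big_mkcond; apply: eq_bigr => i _; case: ltnP => // le_qi.
by rewrite nth_default // scale0r.
Qed.

Lemma mxpevalD (q1 q2 : {poly R}) : mxpeval (q1 + q2) M = mxpeval q1 M + mxpeval q2 M.
Proof.
rewrite !(mxpeval_widen _ (maxn (size q1) (size q2))) ?leq_maxl ?leq_maxr ?size_polyD //.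
by rewrite -big_split; apply: eq_bigr => i _; rewrite coefD scalerDl.
Qed.

Lemma mxpevalZ a (q : {poly R}) : mxpeval (a *: q) M = a *: mxpeval q M.
Proof.
rewrite !(mxpeval_widen _ (size q)) ?size_scale_leq // scaler_sumr.
by apply: eq_bigr => i _; rewrite coefZ scalerA.
Qed.

Lemma mxpevalB (q1 q2 : {poly R}) : mxpeval (q1 - q2) M = mxpeval q1 M - mxpeval q2 M.
Proof. by rewrite mxpevalD -scaleN1r mxpevalZ scaleN1r. Qed.

Lemma mxpevalC a : mxpeval a%:P M = a%:M.
Proof. by rewrite (mxpeval_widen _ 1) ?size_polyC_leq1 // big_ord1 coefC /= scalemx1. Qed.

Lemma mxpevalXM (q : {poly R}) : mxpeval ('X * q) M = M *m mxpeval q M.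
Proof.
have le_Xq : (size ('X * q)%R <= (size q).+1)%N.
  by rewrite (leq_trans (size_polyMleq _ _)) // size_polyX.
rewrite (mxpeval_widen _ _ le_Xq) big_ord_recl coefXM eqxx scale0r add0r.
rewrite /mxpeval mulmx_sumr; apply: eq_bigr => i _.
by rewrite coefXM -scalemxAr.
Qed.

Lemma mxpevalX : mxpeval 'X M = M.
Proof. by rewrite -['X]mulr1 mxpevalXM -polyC1 mxpevalC mulmx1. Qed.

End MatrixPolynomialEvaluation.

Section RKC.
Context {R : realFieldType} {p s : nat} {eps : R} (eps_ge0 : 0 <= eps).

Local Notation w0 := (rkc_w0 s eps).
Local Notation w1 := (rkc_w1 p s eps).
Local Notation b := (rkc_b p s eps).
Local Notation nu := (rkc_nu p s eps).
Local Notation kappa := (rkc_kappa p s eps).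
Local Notation mu := (rkc_mu p s eps).
Local Notation gamma := (rkc_gamma p s eps).
Local Notation c := (rkc_c p s eps).
Local Notation RK := (rkc_R p s eps).
Local Notation Y := (w0%:P + w1 *: 'X : {poly R}).
Local Notation mulX := ('X \*o idfun)%R.

Lemma rkc_b_neq0 j : b j != 0.
Proof. by rewrite gt_eqF // (rkc_b_gt0 eps_ge0). Qed.

Section Stages.
Context {V : lmodType R} (L : {linear V -> V}).

Definition rkc_stage j (x y : V) : V := nu j *: x + kappa j *: y + mu j *: L x.

Lemma rkc_stageE j x y : rkc_stage j.+2 x y =
  (b j.+2 / b j.+1) *: (2%:R *: (w0 *: x + w1 *: L x)) - (b j.+2 / b j) *: y.
Proof.
rewrite /rkc_stage /rkc_nu /rkc_kappa /rkc_mu /= !subSS subn0 scaleNr addrAC.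
by rewrite !scalerDr !scalerA; congr (_ *: _ + _ *: _ - _); ring.
Qed.

Variable u : nat -> V -> V.
Hypotheses (u0 : forall v, u 0 v = v)
  (u1 : forall v, u 1 v = 2%:R *: (w0 *: v + w1 *: L v))
  (uSS : forall i v, u i.+2 v = 2%:R *: (w0 *: u i.+1 v + w1 *: L (u i.+1 v)) - u i v).

Lemma cheb_conv_rkc_stage g j :
  cheb_conv u b g j.+2 = rkc_stage j.+2 (cheb_conv u b g j.+1) (cheb_conv u b g j) + g j.+2.
Proof.
rewrite rkc_stageE (cheb_convSS (w0 \*: idfun \+ w1 \*: L)%function) //.
exact: rkc_b_neq0.
Qed.

End Stages.

Definition rkc_poly_conv (g : nat -> R) k : {poly R} :=
  cheb_conv (fun i q => (chebU R i \Po Y) * q) b (fun j => (g j)%:P) k.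

Lemma rkc_poly_conv0 g : rkc_poly_conv g 0 = 0.
Proof. exact: cheb_conv0. Qed.

Lemma rkc_poly_conv1 g : rkc_poly_conv g 1 = (g 1)%:P.
Proof.
apply: cheb_conv1 => [v|j]; last exact: rkc_b_neq0.
by rewrite /= -polyC1 comp_polyC polyC1 mul1r.
Qed.

Lemma rkc_poly_conv_stage g j : rkc_poly_conv g j.+2 =
  rkc_stage mulX j.+2 (rkc_poly_conv g j.+1) (rkc_poly_conv g j) + (g j.+2)%:P.
Proof.
apply: cheb_conv_rkc_stage => [v|v|i v].
- by rewrite /= -polyC1 comp_polyC polyC1 mul1r.
- by rewrite /= comp_polyZ comp_polyX -!mul_polyC; ring.
- rewrite chebU_SS comp_polyB comp_polyM comp_polyZ comp_polyX.
  by move: (chebU R i.+1 \Po Y) (chebU R i \Po Y) => u1 u0 /=; rewrite -!mul_polyC; ring.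
Qed.

Lemma horner_rkc_poly_conv g k z : (rkc_poly_conv g k).[z] =
  \sum_(1 <= j < k.+1) b k / b j * (chebU R (k - j)).[w0 + w1 * z] * g j.
Proof.
rewrite /rkc_poly_conv /cheb_conv horner_sum; apply: eq_bigr => j _.
by rewrite hornerZ hornerM horner_comp !hornerE.
Qed.

Lemma rkc_stage_mulX j (x y : {poly R}) a :
  (rkc_stage mulX j x y + a%:P) * 'X = rkc_stage mulX j (x * 'X) (y * 'X) + a *: 'X.
Proof. by rewrite /rkc_stage /= -!mul_polyC; ring. Qed.

Lemma rkc_R_sub1_cheb k : RK k - 1 = b k *: ((chebT R k \Po Y) - (Tv s eps k)%:P).
Proof. by rewrite /rkc_R /rkc_a -!mul_polyC; ring. Qed.

Lemma rkc_R_sub1_stage j : RK j.+2 - 1 =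
  rkc_stage mulX j.+2 (RK j.+1 - 1) (RK j - 1) + (mu j.+2 + gamma j.+2) *: 'X.
Proof.
have nu_b : nu j.+2 * b j.+1 = 2%:R * w0 * b j.+2 by rewrite mulfVK ?rkc_b_neq0.
have kappa_b : kappa j.+2 * b j = - b j.+2.
  by rewrite /rkc_kappa !subSS subn0 mulNr mulfVK ?rkc_b_neq0.
have mu_b : mu j.+2 * b j.+1 = 2%:R * w1 * b j.+2 by rewrite mulfVK ?rkc_b_neq0.
have mu_gamma : mu j.+2 + gamma j.+2 = 2%:R * w1 * b j.+2 * Tv s eps j.+1.
  by rewrite /rkc_gamma /rkc_a /= -mu_b; ring.
rewrite /rkc_stage /= !rkc_R_sub1_cheb -scalerAr !scalerA nu_b kappa_b mu_b mu_gamma.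
rewrite /Tv chebT_SS comp_polyB comp_polyM comp_polyZ comp_polyX !hornerE.
move: (chebT R j.+1 \Po Y) (chebT R j \Po Y) (chebT R j.+1).[w0] (chebT R j).[w0].
by move=> t1 t0 T1 T0; rewrite -!mul_polyC; ring.
Qed.

Lemma rkc_R_sub1 k : RK k - 1 = rkc_poly_conv (fun j => mu j + gamma j) k * 'X.
Proof.
move: k; apply: (eq_rec2 (fun j x y => rkc_stage mulX j.+2 x y + (mu j.+2 + gamma j.+2) *: 'X))
  => [| | j | j]; last by rewrite rkc_poly_conv_stage rkc_stage_mulX.
- by rewrite rkc_R_sub1_cheb rkc_poly_conv0 mul0r /Tv /= -polyC1 comp_polyC hornerC subrr scaler0.
- rewrite rkc_R_sub1_cheb rkc_poly_conv1 /Tv /= comp_polyX hornerX /rkc_gamma /rkc_mu /=.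
  by rewrite -!mul_polyC; ring.
- exact: rkc_R_sub1_stage.
Qed.

Lemma rkc_poly_conv_sub_c k : rkc_poly_conv (fun j => mu j + gamma j) k - (c k)%:P =
  rkc_poly_conv (fun j => mu j * c j.-1) k * 'X.
Proof.
move: k; apply: (eq_rec2 (fun j x y => rkc_stage mulX j.+2 x y + (mu j.+2 * c j.+1) *: 'X))
  => [| | j | j]; last by rewrite rkc_poly_conv_stage rkc_stage_mulX.
- by rewrite !rkc_poly_conv0 subrr mul0r.
- by rewrite !rkc_poly_conv1 /rkc_gamma /= addr0 subrr mulr0 mul0r.
- rewrite rkc_poly_conv_stage [c j.+2]/= /rkc_stage /=.
  by move: (rkc_poly_conv _ j.+1) (rkc_poly_conv _ j) => q1 q0; rewrite -!mul_polyC; ring.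
Qed.

Lemma rkc_R_sub1_cX k : RK k - 1 - c k *: 'X = rkc_poly_conv (fun j => mu j * c j.-1) k * 'X^2.
Proof. by rewrite rkc_R_sub1 -mul_polyC -mulrBl rkc_poly_conv_sub_c -mulrA -expr2. Qed.

Lemma rkc_RbarE k : rkc_Rbar p s eps k = rkc_poly_conv (fun j => mu j + gamma j) k.
Proof. by rewrite /rkc_Rbar rkc_R_sub1 mulpK ?polyX_eq0. Qed.

Lemma rkc_RtildeE k : rkc_Rtilde p s eps k = rkc_poly_conv (fun j => mu j * c j.-1) k.
Proof. by rewrite /rkc_Rtilde rkc_R_sub1_cX mulpK // expf_neq0 ?polyX_eq0. Qed.

Lemma horner_rkc_Rbar k z : (rkc_Rbar p s eps k).[z] =
  \sum_(1 <= j < k.+1) b k / b j * (chebU R (k - j)).[w0 + w1 * z] * (mu j + gamma j).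
Proof. by rewrite rkc_RbarE horner_rkc_poly_conv. Qed.

Lemma horner_rkc_Rtilde k z : (rkc_Rtilde p s eps k).[z] =
  \sum_(2 <= j < k.+1) b k / b j * (chebU R (k - j)).[w0 + w1 * z] * mu j * c j.-1.
Proof.
rewrite rkc_RtildeE horner_rkc_poly_conv; case: k => [|k]; first by rewrite !big_geq.
by rewrite big_ltn //= !mulr0 add0r; apply: eq_bigr => j _; rewrite mulrA.
Qed.

Lemma rkc_R_sub1_div k z : z != 0 -> ((RK k).[z] - 1) / z = (rkc_Rbar p s eps k).[z].
Proof.
move=> z_neq0; have -> : (RK k).[z] - 1 = (RK k - 1).[z] by rewrite !hornerE.
by rewrite rkc_R_sub1 rkc_RbarE hornerMX mulfK.
Qed.

Lemma rkc_R_sub1_cX_div k z : z != 0 ->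
  ((RK k).[z] - 1 - c k * z) / z ^+ 2 = (rkc_Rtilde p s eps k).[z].
Proof.
move=> z_neq0; have -> : (RK k).[z] - 1 - c k * z = (RK k - 1 - c k *: 'X).[z].
  by rewrite !hornerE.
by rewrite rkc_R_sub1_cX rkc_RtildeE hornerM hornerXn mulfK // expf_neq0.
Qed.

Section StageVectors.
Context {n : nat} (A : 'M[R]_n) (dt : R) (r : nat -> 'cV[R]_n).
Local Notation d := (rkc_d p s eps A dt r).

Lemma rkc_dSS j : d j.+2 = rkc_stage (mulmx (dt *: A)) j.+2 (d j.+1) (d j) + r j.+2.
Proof. by []. Qed.

Lemma rkc_d_cheb k : d k = \sum_(1 <= j < k.+1)
  (b k / b j) *: (mxpeval (chebU R (k - j)) (w0%:M + (w1 * dt) *: A) *m r j).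
Proof.
set M := _ + _.
have MvE (v : 'cV_n) : M *m v = w0 *: v + w1 *: ((dt *: A) *m v).
  by rewrite mulmxDl mul_scalar_mx -!scalemxAl scalerA.
have u0 (v : 'cV_n) : mxpeval (chebU R 0) M *m v = v.
  by rewrite /= -polyC1 mxpevalC mul1mx.
change (d k = cheb_conv (fun i v => mxpeval (chebU R i) M *m v) b r k); move: k.
apply: (eq_rec2 (fun j x y => rkc_stage (mulmx (dt *: A)) j.+2 x y + r j.+2))
  => [| | j | j]; rewrite ?cheb_conv0 //.
  by rewrite (cheb_conv1 _ u0 _ _ rkc_b_neq0).
apply: cheb_conv_rkc_stage => [|v|i v]; first exact: u0.
  by rewrite /= mxpevalZ mxpevalX -scalemxAl MvE.
rewrite chebU_SS mxpevalB -scalerAl mxpevalZ mxpevalXM.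
by rewrite mulmxBl -scalemxAl -mulmxA MvE.
Qed.

Lemma rkc_d_Rbar rr : (1 <= s)%N ->
  (forall j, (1 <= j <= s)%N -> r j = (mu j + gamma j) *: rr) ->
  forall k, (k <= s)%N -> d k = mxpeval (rkc_Rbar p s eps k) (dt *: A) *m rr.
Proof.
move=> s_ge1 r_eq k le_ks; rewrite rkc_RbarE; move: k le_ks.
apply: (eq_rec2_le (fun j x y =>
    rkc_stage (mulmx (dt *: A)) j.+2 x y + (mu j.+2 + gamma j.+2) *: rr) s)
  => [| | j le_js | j _].
- by rewrite rkc_poly_conv0 -polyC0 mxpevalC mul_scalar_mx scale0r.
- by rewrite rkc_poly_conv1 mxpevalC mul_scalar_mx /= r_eq ?s_ge1.
- by rewrite rkc_dSS r_eq // (leq_trans _ le_js).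
rewrite rkc_poly_conv_stage /rkc_stage /= !mxpevalD !mxpevalZ mxpevalXM mxpevalC.
by rewrite !mulmxDl -!scalemxAl mulmxA mul_scalar_mx.
Qed.

End StageVectors.

End RKC.
Theorem lemma3p1 (R : realFieldType) (p s : nat) (eps : R)
  (hp : (p == 1%N) || (p == 2%N)) (hs : (1 <= s)%N) (hs2 : p = 2%N -> (2 <= s)%N)
  (heps : 0 <= eps)
  (n : nat) (A : 'M[R]_n) (dt : R) (hdt : 0 < dt) (r : nat -> 'cV[R]_n) :
  let w0 := rkc_w0 s eps in
  let w1 := rkc_w1 p s eps in
  let b := rkc_b p s eps in
  let mu := rkc_mu p s eps in
  let gamma := rkc_gamma p s eps in
  let c := rkc_c p s eps in
  let d := rkc_d p s eps A dt r in
  (* (i) *)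
  (forall k, (1 <= k <= s)%N ->
     d k = \sum_(1 <= j < k.+1)
             (b k / b j) *: (mxpeval (chebU R (k - j)) (w0%:M + (w1 * dt) *: A) *m r j))
  (* (ii) *)
  /\ (forall k, (1 <= k <= s)%N ->
     (forall z : R, z != 0 ->
        ((rkc_R p s eps k).[z] - 1) / z
          = \sum_(1 <= j < k.+1) b k / b j * (chebU R (k - j)).[w0 + w1 * z] * (mu j + gamma j)
        /\ ((rkc_R p s eps k).[z] - 1 - c k * z) / z ^+ 2
          = \sum_(2 <= j < k.+1) b k / b j * (chebU R (k - j)).[w0 + w1 * z] * mu j * c j.-1)
     /\ rkc_R p s eps k - 1 = rkc_Rbar p s eps k * 'X
     /\ rkc_R p s eps k - 1 - c k *: 'X = rkc_Rtilde p s eps k * 'X^2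
     /\ (forall z : R,
          (rkc_Rbar p s eps k).[z]
          = \sum_(1 <= j < k.+1) b k / b j * (chebU R (k - j)).[w0 + w1 * z] * (mu j + gamma j))
     /\ (forall z : R,
          (rkc_Rtilde p s eps k).[z]
          = \sum_(2 <= j < k.+1) b k / b j * (chebU R (k - j)).[w0 + w1 * z] * mu j * c j.-1))
  (* (iii) *)
  /\ (forall rr : 'cV[R]_n,
        (forall j, (1 <= j <= s)%N -> r j = (mu j + gamma j) *: rr) ->
        forall k, (1 <= k <= s)%N ->
          d k = mxpeval (rkc_Rbar p s eps k) (dt *: A) *m rr).
Proof.
move=> w0 w1 b mu gamma c d.
split; first by move=> k _; exact: (rkc_d_cheb heps).
split; last by move=> rr r_eq k /andP[_ le_ks]; exact: (rkc_d_Rbar heps).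
move=> k _; split; [|split; [|split; [|split]]].
- move=> z z_neq0.
  rewrite (rkc_R_sub1_div heps) // (rkc_R_sub1_cX_div heps) //.
  by rewrite (horner_rkc_Rbar heps) (horner_rkc_Rtilde heps).
- by rewrite (rkc_R_sub1 heps) (rkc_RbarE heps).
- by rewrite (rkc_R_sub1_cX heps) (rkc_RtildeE heps).
- exact: (horner_rkc_Rbar heps).
- exact: (horner_rkc_Rtilde heps).
Qed.
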